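(* Assume $\mathcal{T}$ is a tree. Fix $(i_0,j_0)\in\mathcal{E}$ such that $\mu_{i_0j_0}\ge\theta_{i_0}$. There is a constant $m_7$ such that for all measurable locally bounded functions $w_i,x_i$ ($i\in\mathcal{I}$) and $\psi_{ij}$ (with $\psi_{ij}=0$ for $i\not\sim j$) on $[0,\infty)$ satisfying, with $y(t):=(e\cdot x(t))^+e_{i_0}\in\mathbb{R}^I$ and $z(t):=(e\cdot x(t))^-e_{j_0}\in\mathbb{R}^J$, $$x_i(t)=w_i(t)-\sum_{j\in\mathcal{J}}\mu_{ij}\int_0^t\psi_{ij}(s)ds-\theta_i\int_0^ty_i(s)ds,\quad \sum_{j\in\mathcal{J}}\psi_{ij}=x_i-y_i\ (i\in\mathcal{I}),\quad \sum_{i\in\mathcal{I}}\psi_{ij}=-z_j\ (j\in\mathcal{J}),$$ we have $\|x(t)\|\le m_7(1+t)^{m_7}\|w\|_t^*$ for all $t\ge0$, where $m_7$ does not depend on $w$ and $t$.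
   Context: $\mathcal{I}=\{1,\dots,I\}$, $\mathcal{J}=\{I+1,\dots,I+J\}$, $\mathcal{E}\subset\mathcal{I}\times\mathcal{J}$, $i\sim j$ iff $(i,j)\in\mathcal{E}$; $\mathcal{T}$ is the bipartite graph with vertices $\mathcal{I}\cup\mathcal{J}$ and edges $\mathcal{E}$. Constants $\mu_{ij}>0$ for $(i,j)\in\mathcal{E}$, $\mu_{ij}=0$ otherwise, $\theta_i\ge0$. $e=(1,\dots,1)'$; $e_{i_0}$ (resp. $e_{j_0}$) denotes the coordinate unit vector in $\mathbb{R}^I$ (resp. $\mathbb{R}^J$, indexed by $\mathcal{J}$) for coordinate $i_0$ (resp. $j_0$); $a^\pm$ positive/negative parts. $\|x\|=\sum|x_i|$, $\|w\|_t^*=\sup_{s\le t}\|w(s)\|$. *)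

From HB Require Import structures.
From mathcomp Require Import all_boot all_order all_algebra.
From mathcomp Require Import all_classical all_reals all_analysis.
Set Implicit Arguments. Unset Strict Implicit. Unset Printing Implicit Defensive.
Import Order.TTheory GRing.Theory Num.Theory.
Import numFieldNormedType.Exports.
Local Open Scope classical_set_scope.
Local Open Scope ring_scope.

Definition bip_adj (nI nJ : nat) (E : 'I_nI -> 'I_nJ -> bool) :
    rel ('I_nI + 'I_nJ)%type :=
  fun u v => match u, v with
             | inl i, inr j => E i j
             | inr j, inl i => E i j
             | _, _ => false
             end.

Definition is_tree (nI nJ : nat) (E : 'I_nI -> 'I_nJ -> bool) : Prop :=
  (forall u v : ('I_nI + 'I_nJ)%type, connect (bip_adj E) u v) /\
  (forall p : seq ('I_nI + 'I_nJ)%type,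
      uniq p -> (2 < size p)%N -> ~~ cycle (bip_adj E) p).

Definition pos_part {R : realType} (a : R) : R := Num.max a 0.
Definition neg_part {R : realType} (a : R) : R := Num.max (- a) 0.

Definition integ0 {R : realType} (f : R -> R) (t : R) : R :=
  \int[lebesgue_measure]_(s in `[0, t]) f s.

Definition nonneg_half (R : realType) : set R := `[0, +oo[%classic.

Definition loc_bounded {R : realType} (f : R -> R) : Prop :=
  forall t : R, 0 <= t -> exists M : R, forall s : R, 0 <= s <= t -> `|f s| <= M.

Definition norm1 {R : realType} (n : nat) (v : 'I_n -> R) : R :=
  \sum_(i < n) `|v i|.

Definition supnorm {R : realType} (n : nat) (w : 'I_n -> R -> R) (t : R) : R :=
  sup [set norm1 (fun i => w i s) | s in `[0, t]%classic].

From HB Require Import structures.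
From mathcomp Require Import all_boot all_order all_algebra.
From mathcomp Require Import all_classical all_reals all_analysis.
From mathcomp Require Import measurable_realfun ring lra.
Set Implicit Arguments.
Unset Strict Implicit.
Unset Printing Implicit Defensive.
Import Order.TTheory GRing.Theory Num.Theory.
Import numFieldNormedType.Exports.

(* Write x_i = w_i - \int_0 rho_i with rate rho_i = sum_j mu_ij psi_ij + theta_i y_i.
   If rho_i >= -K wherever x_i > 0 and rho_i <= K wherever x_i < 0, then
   |x_i(t)| <= 2 ||w||*_t + K t: after the last time before t at which x_i <= 0, the
   integral can decrease by at most K per unit time.  Such rate bounds are obtained by
   peeling the tree leaf by leaf down to the edge (i0, j0), keeping the invariant that
   the x_i of removed vertices and the psi_ij of removed edges are bounded by B.  At a
   leaf j != j0 the column balance sum_i psi_ij = 0 bounds the flow on its last edge;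
   at a leaf i != i0 the row balance sum_j psi_ij = x_i makes that flow follow x_i, so
   rho_i has the required sign-dependent bound; at the root edge, mu_i0j0 >= theta_i0
   keeps the overflow y_i0 from pushing x_i0 further.  Each step multiplies B by
   C (1 + t), whence a polynomial bound of degree |I| + |J|. *)

Section ForestPeeling.
Variables (V : finType) (e : rel V).
Hypothesis e_sym : symmetric e.
Hypothesis e_irr : irreflexive e.
Hypothesis e_acyclic : forall p : seq V, uniq p -> (2 < size p)%N -> ~~ cycle e p.
Variable A : {set V}.

Definition path_in (q : seq V) := [&& q != [::], sorted e q, uniq q & all (mem A) q].

Lemma path_in_rev q : path_in q -> path_in (rev q).
Proof.
case/and4P=> q0 sq uq Aq; apply/and4P; split.
- by rewrite -size_eq0 size_rev size_eq0.
- by rewrite rev_sorted; apply: sub_sorted sq => a b; rewrite e_sym.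
- by rewrite rev_uniq.
- by rewrite all_rev.
Qed.

Lemma longest_path_end_nbrs s l :
  path_in (rcons s l) -> (forall q, path_in q -> size q <= size (rcons s l))%N ->
  (#|[set a in A | e l a]| <= 1)%N.
Proof.
case/and4P=> _ sq uq Aq longest.
have nbr_in_s c : c \in A -> e l c -> c \in s.
  move=> cA lc; apply/negPn/negP => cs.
  have cl : c != l by apply: contraTneq lc => ->; rewrite e_irr.
  suff /longest : path_in (rcons (rcons s l) c) by rewrite size_rcons ltnn.
  apply/and4P; split => //.
  - by rewrite -size_eq0 size_rcons.
  - have -> : rcons (rcons s l) c = s ++ [:: l; c] by rewrite -!cats1 -catA.
    by rewrite sorted_cat_cons sq /= lc.
  - by rewrite rcons_uniq mem_rcons in_cons negb_or cl cs.
  - by rewrite all_rcons /= cA.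
have nbr_pred c : c \in A -> e l c -> exists s1, s = rcons s1 c.
  move=> cA lc; move: sq uq; case/splitPr: (nbr_in_s c cA lc) => s1 [|a s2].
    by exists s1; rewrite cats1.
  set p := c :: rcons (a :: s2) l.
  have -> : rcons (s1 ++ c :: a :: s2) l = s1 ++ p by rewrite rcons_cat.
  rewrite sorted_cat_cons cat_uniq => /andP[_ sp] /and3P[_ _ up].
  have p3 : (2 < size p)%N by rewrite /p /= size_rcons.
  by case/negP: (e_acyclic up p3); rewrite /p /cycle rcons_path sp last_rcons.
apply/card_le1_eqP => a b; rewrite !inE => /andP[aA la] /andP[bA lb].
have [s1 sa] := nbr_pred a aA la; have [s2 sb] := nbr_pred b bA lb.
by move: sb; rewrite sa => /(congr1 (last a)); rewrite !last_rcons.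
Qed.

Lemma forest_peel u1 u2 : u1 \in A -> u2 \in A -> e u1 u2 ->
  A = [set u1; u2] \/
  exists2 v, v \in A :\: [set u1; u2] & (#|[set a in A | e v a]| <= 1)%N.
Proof.
move=> u1A u2A u12; have [->|A_big] := eqVneq A [set u1; u2]; [by left|right].
apply: contrapT => no_leaf.
have forks v : v \in A :\: [set u1; u2] ->
    exists a b, [/\ a \in A, b \in A, e v a, e v b & a != b].
  move=> vA; apply: contrapT => no_fork; apply: no_leaf; exists v => //.
  apply/card_le1_eqP => a b; rewrite !inE => /andP[aA va] /andP[bA vb].
  apply: contrapT => ba; apply: no_fork.
  by exists a, b; split; rewrite // eq_sym; apply/eqP.
have end_in v : v \in A -> (#|[set a in A | e v a]| <= 1)%N -> v \in [set u1; u2].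
  move=> vA leaf; apply: contrapT => v12; apply: no_leaf.
  by exists v; rewrite // finset.in_setD vA andbT; apply/negP.
pose good n := `[< exists q, path_in q /\ size q = n >].
have good1 : good 1%N by apply/asboolP; exists [:: u1]; rewrite /path_in /= u1A.
have good_le n : good n -> (n <= #|V|)%N.
  by move=> /asboolP[q [/and4P[_ _ uq _] <-]]; rewrite -(card_uniqP uq) max_card.
case: (ex_maxnP (ex_intro good 1%N good1) good_le) => n /asboolP[q [pq <-]] qmax.
have {qmax} longest q' : path_in q' -> (size q' <= size q)%N.
  by move=> pq'; apply: qmax; apply/asboolP; exists q'.
case: q => [|h t] in pq longest *; first by [].
have [v0 v0A] : exists v0, v0 \in A :\: [set u1; u2].
  apply/set0Pn; apply: contra_neq A_big => /eqP; rewrite finset.setD_eq0 => sub.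
  by apply/eqP; rewrite finset.eqEsubset sub finset.subUset !finset.sub1set u1A u2A.
have [a [b [aA bA va vb ab]]] := forks v0 v0A.
have size3 : (2 < size (h :: t))%N.
  apply: longest (a :: v0 :: [:: b]) _.
  move: v0A; rewrite !inE negb_or => /andP[/andP[v1 v2] v0A].
  have av0 : a != v0 by apply: contraTneq va => ->; rewrite e_irr.
  have v0b : v0 != b by apply: contraTneq vb => <-; rewrite e_irr.
  by rewrite /path_in /= e_sym va vb !inE !negb_or av0 ab v0b aA v0A bA.
have last12 : last h t \in [set u1; u2].
  apply: end_in; first by case/and4P: pq => _ _ _ /allP; apply; exact: mem_last.
  by have := @longest_path_end_nbrs (belast h t) (last h t); rewrite -lastI; apply.
have head12 : h \in [set u1; u2].
  apply: end_in; first by case/and4P: pq => _ _ _ /andP[].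
  apply: (@longest_path_end_nbrs (rev t)); rewrite -rev_cons; first exact: path_in_rev.
  by move=> q' /longest; rewrite size_rev.
case/and4P: pq => _ sq uq _.
have last_in_t : last h t \in t.
  by move: size3; case: t {sq uq longest last12} => // c t' _ /=; exact: mem_last.
have h_last : h != last h t by apply: contraTneq last_in_t => <-; case/andP: uq.
have closing : e (last h t) h.
  move: h_last; rewrite !inE in head12 last12.
  case/orP: head12 => /eqP hu; case/orP: last12 => /eqP lu;
    by rewrite lu hu ?eqxx // e_sym.
by case/negP: (e_acyclic uq size3); rewrite /cycle rcons_path closing andbT.
Qed.
End ForestPeeling.

Local Open Scope classical_set_scope.
Local Open Scope ring_scope.

Section Integ0.
Variable R : realType.
Implicit Types (f g : R -> R) (a b c d L : R).

Lemma integrable_sub_itv f L b (i : interval R) :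
  measurable_fun (@nonneg_half R) f -> [set` i] `<=` `[0, b]%classic ->
  (forall s, 0 <= s <= b -> `|f s| <= L) ->
  lebesgue_measure.-integrable [set` i] (EFin \o f).
Proof.
move=> mf sub fL; apply: measurable_bounded_integrable.
- exact: measurable_itv.
- apply: (@le_lt_trans _ _ (lebesgue_measure `[0, b])).
    by apply: le_measure; rewrite ?inE //; exact: measurable_itv.
  by rewrite lebesgue_measure_itv /=; case: ifP => _; exact: ltry.
- apply: measurable_funS mf => //; first exact: measurable_itv.
  by move=> s /sub; rewrite /nonneg_half /= !in_itv /= => /andP[->].
- exists L; split; first exact: num_real.
  by move=> M LM s /sub /=; rewrite in_itv /= => /fL fsL; apply: le_trans fsL (ltW LM).
Qed.

Lemma integ0_incr f L a b :
  measurable_fun (@nonneg_half R) f -> 0 <= a <= b ->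
  (forall s, 0 <= s <= b -> `|f s| <= L) ->
  integ0 f b - integ0 f a = \int[lebesgue_measure]_(s in `]a, b]) f s.
Proof.
move=> mf /andP[a0 ab] fL; rewrite /integ0.
have -> : `[0, b]%classic = `[0, a]%classic `|` `]a, b]%classic :> set R.
  by rewrite -itv_bndbnd_setU //= bnd_simp.
rewrite Rintegral_setU //; first by rewrite addrAC subrr add0r.
- by rewrite -itv_bndbnd_setU ?bnd_simp //; exact: integrable_sub_itv fL.
- apply/disj_setPS => s [] /=; rewrite !in_itv /= => /andP[_ sa] /andP[aS _].
  by have := lt_le_trans aS sa; rewrite ltxx.
Qed.

Lemma integ0_cst c b : 0 <= b -> integ0 (fun=> c) b = c * b.
Proof.
move=> b0; rewrite /integ0 Rintegral_cst //= lebesgue_measure_itv /= lte_fin.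
case: ifPn => [_|]; first by rewrite -EFinD subr0.
by rewrite -leNgt => b_le0; have -> : b = 0 by apply/le_anti; rewrite b_le0 b0.
Qed.

Lemma integ0_at0 f : integ0 f 0 = 0.
Proof. by rewrite /integ0 set_itv1 Rintegral_set1. Qed.

Lemma integ0_incr_within f L a b c d :
  measurable_fun (@nonneg_half R) f -> 0 <= a <= b ->
  (forall s, 0 <= s <= b -> `|f s| <= L) ->
  (forall s, a < s <= b -> c <= f s <= d) ->
  c * (b - a) <= integ0 f b - integ0 f a <= d * (b - a).
Proof.
move=> mf /andP[a0 ab] fL fcd; have b0 := le_trans a0 ab.
have sub : `]a, b]%classic `<=` `[0, b]%classic.
  by move=> s /=; rewrite !in_itv /= => /andP[/ltW/(le_trans a0) -> ->].
have cst_incr e : e * (b - a) = \int[lebesgue_measure]_(s in `]a, b]) e.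
  rewrite mulrBr -(integ0_cst e b0) -(integ0_cst e a0).
  by rewrite (@integ0_incr _ `|e|) ?a0 ?ab //; exact: measurable_cst.
rewrite (integ0_incr mf _ fL) ?a0 ?ab // !cst_incr.
have mi : measurable `]a, b]%classic by exact: measurable_itv.
have fi := integrable_sub_itv mf sub fL.
have ci e : lebesgue_measure.-integrable `]a, b]%classic (EFin \o (fun=> e)).
  by apply: (@integrable_sub_itv _ `|e| b) => //; exact: measurable_cst.
apply/andP; split; apply: le_Rintegral => // s /=; rewrite in_itv /= => /fcd /andP[//].
Qed.

Lemma integ0_lipschitz f L a b :
  measurable_fun (@nonneg_half R) f -> 0 <= a <= b ->
  (forall s, 0 <= s <= b -> `|f s| <= L) ->
  `|integ0 f b - integ0 f a| <= L * (b - a).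
Proof.
move=> mf ab fL; rewrite ler_norml -mulNr.
apply: (integ0_incr_within mf ab fL) => s /andP[aS sb].
rewrite -ler_norml fL // sb andbT; case/andP: ab => a0 _.
exact: le_trans a0 (ltW aS).
Qed.

Lemma integ0_lincomb (I : finType) (c : I -> R) (F : I -> R -> R) d g L L' b :
  (forall i, measurable_fun (@nonneg_half R) (F i)) -> measurable_fun (@nonneg_half R) g ->
  (forall i s, 0 <= s <= b -> `|F i s| <= L) -> (forall s, 0 <= s <= b -> `|g s| <= L') ->
  integ0 (fun s => \sum_i c i * F i s + d * g s) b =
  \sum_i c i * integ0 (F i) b + d * integ0 g b.
Proof.
move=> mF mg FL gL.
have intg (h : R -> R) M : measurable_fun (@nonneg_half R) h ->
    (forall s, 0 <= s <= b -> `|h s| <= M) ->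
    lebesgue_measure.-integrable `[0, b]%classic (EFin \o h).
  by move=> mh hM; exact: integrable_sub_itv mh (@subset_refl _ _) hM.
have mcF i : measurable_fun (@nonneg_half R) (fun s => c i * F i s).
  exact: measurable_funM (measurable_cst _) (mF i).
have cFL i s : 0 <= s <= b -> `|c i * F i s| <= `|c i| * L.
  by move=> sb; rewrite normrM ler_wpM2l ?FL.
have isum (r : seq I) : lebesgue_measure.-integrable `[0, b]%classic
    (EFin \o (fun s => \sum_(i <- r) c i * F i s)).
  apply: (intg _ (\sum_(i <- r) `|c i| * L)); first exact: measurable_sum.
  by move=> s sb; apply: le_trans (ler_norm_sum _ _ _) (ler_sum _ _) => i _; exact: cFL.
rewrite /integ0 RintegralD //; last by apply: (intg _ (`|d| * L')) => [|s sb];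
  [exact: measurable_funM (measurable_cst _) mg | rewrite normrM ler_wpM2l ?gL].
rewrite RintegralZl; last exact: intg mg gL.
congr (_ + _); elim: (index_enum I) => [|i r IH].
  under eq_Rintegral do rewrite big_nil.
  by rewrite big_nil Rintegral_cst ?mul0r //; exact: measurable_itv.
under eq_Rintegral do rewrite big_cons.
rewrite big_cons RintegralD ?RintegralZl ?IH //.
- exact: intg (mF i) (FL i).
- exact: intg (mcF i) (cFL i).
- exact: measurable_itv.
Qed.

End Integ0.

Section SlowDecrease.
Variable R : realType.
Variables (u v P : R -> R) (T V K L : R).
Hypothesis K_ge0 : 0 <= K.
Hypothesis L_ge0 : 0 <= L.
Hypothesis uE : forall s, 0 <= s <= T -> u s = v s - P s.
Hypothesis v_le : forall s, 0 <= s <= T -> `|v s| <= V.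
Hypothesis P0 : P 0 = 0.
Hypothesis P_lip : forall a b, 0 <= a <= b -> b <= T -> `|P b - P a| <= L * (b - a).
Hypothesis P_slow : forall a b, 0 <= a <= b -> b <= T ->
  (forall s, a < s <= b -> 0 < u s) -> P a - P b <= K * (b - a).

Lemma ub_of_slow_decrease t : 0 <= t <= T -> u t <= 2 * V + K * t.
Proof.
move=> /andP[t0 tT]; have T0 := le_trans t0 tT.
have V0 : 0 <= V by apply: le_trans (normr_ge0 (v 0)) (v_le _); rewrite lexx T0.
(* [tau] is the last time before [t] at which [u <= 0], or 0 if there is none. *)
pose A := [set s | 0 <= s <= t /\ (s = 0 \/ u s <= 0)].
have A0 : A 0 by split; [rewrite lexx t0 | left].
have supA : has_sup A by split; [exists 0 | exists t => s [/andP[]]].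
pose tau := sup A.
have [tau0 taut] : 0 <= tau /\ tau <= t.
  by split; [exact: sup_upper_bound | apply: ge_sup; [exists 0 | move=> s [/andP[]]]].
have PA s : A s -> - V <= P s.
  move=> [/andP[s0 st] [->|us]]; first by rewrite P0 oppr_le0.
  have sT : 0 <= s <= T by rewrite s0 (le_trans st tT).
  have := v_le sT; rewrite ler_norml => /andP[Vv _].
  by apply: le_trans Vv _; move: us; rewrite uE // subr_le0.
have P_tau : - V <= P tau.
  apply/ler_addgt0Pr => e e0; pose eps := e / (1 + L).
  have L1 : 0 < 1 + L by rewrite (lt_le_trans ltr01) // lerDl.
  have eps0 : 0 < eps by rewrite divr_gt0.
  have Leps : L * eps <= e by rewrite /eps mulrA ler_pdivrMr //; nra.
  have [s As] := sup_adherent eps0 supA; rewrite -/tau => tau_s.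
  have s_tau : 0 <= s <= tau by rewrite sup_upper_bound // andbT; case: As => /andP[].
  have := P_lip s_tau (le_trans taut tT); rewrite ler_norml => /andP[Plo _].
  have := PA s As; have : L * (tau - s) <= L * eps by rewrite ler_wpM2l //; lra.
  lra.
have u_pos s : tau < s <= t -> 0 < u s.
  move=> /andP[tau_s st]; rewrite ltNge; apply/negP => us.
  have As : A s by split; [rewrite st (le_trans tau0 (ltW tau_s)) | right].
  by move: tau_s; rewrite ltNge sup_upper_bound.
have tT' : 0 <= t <= T by rewrite t0 tT.
have := P_slow (_ : 0 <= tau <= t) tT u_pos; rewrite tau0 taut => /(_ isT) Pt.
have := v_le tT'; rewrite ler_norml => /andP[_ vt].
rewrite uE //; have : 0 <= K * tau by exact: mulr_ge0.
nra.
Qed.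
End SlowDecrease.

Section IntegralFeedback.
Variable R : realType.

Lemma integ0_feedback_norm_le (u v rho : R -> R) (T V K L : R) :
  0 <= K -> measurable_fun (@nonneg_half R) rho ->
  (forall s, 0 <= s <= T -> `|rho s| <= L) ->
  (forall s, 0 <= s <= T -> u s = v s - integ0 rho s) ->
  (forall s, 0 <= s <= T -> `|v s| <= V) ->
  (forall s, 0 <= s <= T -> 0 < u s -> - K <= rho s) ->
  (forall s, 0 <= s <= T -> u s < 0 -> rho s <= K) ->
  forall t, 0 <= t <= T -> `|u t| <= 2 * V + K * t.
Proof.
move=> K0 mrho rhoL uE vV rho_lo rho_hi t tT.
have T0 : 0 <= T by case/andP: tT => /le_trans; apply.
have L0 : 0 <= L by apply: le_trans (normr_ge0 (rho 0)) (rhoL _ _); rewrite lexx T0.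
have sub a b s : 0 <= a -> b <= T -> a < s <= b -> 0 <= s <= T.
  by move=> a0 bT /andP[/ltW/(le_trans a0) -> /le_trans]; apply.
have rhoLb b : b <= T -> forall s, 0 <= s <= b -> `|rho s| <= L.
  by move=> bT s /andP[s0 sb]; rewrite rhoL // s0 (le_trans sb bT).
have lip a b : 0 <= a <= b -> b <= T ->
    `|integ0 rho b - integ0 rho a| <= L * (b - a).
  by move=> ab bT; exact: integ0_lipschitz mrho ab (rhoLb b bT).
have within a b c d : 0 <= a <= b -> b <= T -> (forall s, a < s <= b -> c <= rho s <= d) ->
    c * (b - a) <= integ0 rho b - integ0 rho a <= d * (b - a).
  by move=> ab bT; exact: integ0_incr_within mrho ab (rhoLb b bT).
rewrite ler_norml; apply/andP; split.
- rewrite lerNl; apply: (@ub_of_slow_decrease _ (fun s => - u s) (fun s => - v s)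
    (fun s => - integ0 rho s) T V K L) => //.
  + by move=> s sT; rewrite uE // opprB opprK addrC.
  + by move=> s sT; rewrite normrN vV.
  + by rewrite integ0_at0 oppr0.
  + by move=> a b ab bT; rewrite -opprD normrN lip.
  + move=> a b ab bT u_neg; rewrite opprK addrC.
    suff /(within a b _ _ ab bT)/andP[] : forall s, a < s <= b -> - L <= rho s <= K by [].
    move=> s sab; have sT := sub _ _ _ (proj1 (andP ab)) bT sab.
    have := rhoL _ sT; rewrite ler_norml => /andP[-> _] /=.
    by rewrite rho_hi // -oppr_gt0 u_neg.
- apply: (@ub_of_slow_decrease _ u v (integ0 rho) T V K L) => //.
  + exact: integ0_at0.
  + move=> a b ab bT u_pos; rewrite -opprB lerNl -mulNr.
    suff /(within a b _ _ ab bT)/andP[] : forall s, a < s <= b -> - K <= rho s <= L by [].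
    move=> s sab; have sT := sub _ _ _ (proj1 (andP ab)) bT sab.
    have := rhoL _ sT; rewrite ler_norml => /andP[_ ->].
    by rewrite rho_lo ?u_pos.
Qed.
End IntegralFeedback.

Section RealBounds.
Variable R : realType.

Lemma sum_le_card n (F : 'I_n -> R) B : (forall k, F k <= B) -> \sum_k F k <= n%:R * B.
Proof.
move=> FB; rewrite mulr_natl -[in B *+ n](card_ord n) -sumr_const.
by apply: ler_sum => k _; exact: FB.
Qed.

Lemma sum_others_le n (F : 'I_n -> R) k0 B : 0 <= B ->
  (forall k, k != k0 -> `|F k| <= B) -> `|\sum_k F k - F k0| <= n%:R * B.
Proof.
move=> B0 FB; rewrite (bigD1 k0) //= addrAC subrr add0r.
apply: le_trans (ler_norm_sum _ _ _) _.
apply: le_trans (_ : \sum_k (if k != k0 then B else 0) <= _).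
  by rewrite big_mkcond; apply: ler_sum => k _; case: ifPn => // /FB.
by apply: sum_le_card => k; case: ifP.
Qed.

Lemma weighted_sum_le n (m a : 'I_n -> R) c M :
  (forall j, 0 <= m j) -> \sum_j m j <= M -> 0 <= c -> (forall j, a j <= c) ->
  \sum_j m j * a j <= M * c.
Proof.
move=> m0 mM c0 ac; apply: le_trans (_ : \sum_j m j * c <= _).
  by apply: ler_sum => j _; rewrite ler_wpM2l.
by rewrite -mulr_suml ler_wpM2r.
Qed.

(* The rate of x_i0, with m, th, X, Y for mu_i0j0, theta_i0, x_i0, y_i0, c for the sum
   of the other x_k, and r, q for the total flow, resp. weighted flow, through the
   edges at i0 other than (i0, j0). *)
Lemma overflow_rate_bounds (m th M X Y c r q b : R) :
  0 <= th <= m -> m <= M -> Y = Num.max (X + c) 0 ->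
  `|c| <= b -> `|r| <= b -> `|q| <= M * b ->
  (0 < X -> - (3 * M * b) <= q + m * (X - Y - r) + th * Y) /\
  (X < 0 -> q + m * (X - Y - r) + th * Y <= 3 * M * b).
Proof.
move=> /andP[th0 thm] mM YE /ler_normlP[cl cu] /ler_normlP[rl ru] /ler_normlP[ql qu].
have b0 : 0 <= b by lra.
have m0 := le_trans th0 thm.
have Y0 : 0 <= Y by rewrite YE le_max lexx orbT.
split=> X0.
- have : (m - th) * Y <= (m - th) * (X + b).
    by rewrite ler_wpM2l ?subr_ge0 // YE ge_max lerD2l cu /=; lra.
  have : m * b <= M * b by rewrite ler_wpM2r //.
  have : (m - th) * b <= M * b by rewrite ler_wpM2r //; lra.
  have : - (m * b) <= m * r by rewrite -mulrN ler_wpM2l // lerNl.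
  have := mulr_ge0 th0 (ltW X0).
  nra.
- have : 0 <= (m - th) * Y by rewrite mulr_ge0 // subr_ge0.
  have := mulr_ge0_le0 m0 (ltW X0).
  have : m * - r <= m * b by rewrite ler_wpM2l.
  have : m * b <= M * b by rewrite ler_wpM2r //.
  nra.
Qed.
End RealBounds.

Section Network.
Variables (R : realType) (nI nJ : nat) (E : 'I_nI -> 'I_nJ -> bool).
Variables (mu : 'I_nI -> 'I_nJ -> R) (theta : 'I_nI -> R) (i0 : 'I_nI) (j0 : 'I_nJ).
Hypothesis mu_ge0 : forall i j, 0 <= mu i j.
Hypothesis theta_ge0 : forall i, 0 <= theta i.
Hypothesis theta_le_mu : theta i0 <= mu i0 j0.

Definition rate_const : R := 1 + \sum_i \sum_j mu i j + \sum_i theta i.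
Definition nodes : R := (nI + nJ)%:R.
Definition growth_const : R := 3 * rate_const * nodes + nodes + 2.

Lemma row_mu_le i : \sum_j mu i j <= rate_const.
Proof.
have : 0 <= \sum_k theta k by rewrite sumr_ge0.
have : \sum_j mu i j <= \sum_k \sum_j mu k j.
  by rewrite (bigD1 i) //= lerDl sumr_ge0 // => k _; rewrite sumr_ge0.
rewrite /rate_const; lra.
Qed.

Lemma mu_le i j : mu i j <= rate_const.
Proof.
by apply: le_trans (row_mu_le i); rewrite (bigD1 j) //= lerDl sumr_ge0.
Qed.

Lemma theta_le i : theta i <= rate_const.
Proof.
have : theta i <= \sum_k theta k by rewrite (bigD1 i) //= lerDl sumr_ge0.
have : 0 <= \sum_k \sum_j mu k j by rewrite sumr_ge0 // => k _; rewrite sumr_ge0.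
rewrite /rate_const; lra.
Qed.

Lemma rate_const_ge1 : 1 <= rate_const.
Proof.
have : 0 <= \sum_k \sum_j mu k j by rewrite sumr_ge0 // => k _; rewrite sumr_ge0.
have : 0 <= \sum_k theta k by rewrite sumr_ge0.
rewrite /rate_const; lra.
Qed.

Lemma nodes_ge1 : 1 <= nodes.
Proof. by rewrite /nodes ler1n addn_gt0 (leq_ltn_trans (leq0n i0) (ltn_ord i0)). Qed.

Lemma nI_le_nodes : nI%:R <= nodes.
Proof. by rewrite /nodes ler_nat leq_addr. Qed.

Lemma nJ_le_nodes : nJ%:R <= nodes.
Proof. by rewrite /nodes ler_nat leq_addl. Qed.

Lemma growth_const_ge1 : 1 <= growth_const.
Proof.
rewrite /growth_const; have := rate_const_ge1; have := nodes_ge1 => N1 M1.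
have : 0 <= rate_const * nodes by rewrite mulr_ge0 //; lra.
nra.
Qed.

Variables (w x : 'I_nI -> R -> R) (psi : 'I_nI -> 'I_nJ -> R -> R).

Definition ypos i t := if i == i0 then pos_part (\sum_k x k t) else 0.
Definition zneg j t := if j == j0 then neg_part (\sum_k x k t) else 0.
Definition rate i s := \sum_j mu i j * psi i j s + theta i * ypos i s.

Hypothesis x_meas : forall i, measurable_fun (@nonneg_half R) (x i).
Hypothesis psi_meas : forall i j, measurable_fun (@nonneg_half R) (psi i j).
Hypothesis x_eq : forall i t, 0 <= t ->
  x i t = w i t - \sum_j mu i j * integ0 (psi i j) t - theta i * integ0 (ypos i) t.
Hypothesis row_sum : forall i t, 0 <= t -> \sum_j psi i j t = x i t - ypos i t.
Hypothesis col_sum : forall j t, 0 <= t -> \sum_i psi i j t = - zneg j t.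

Variables (T W Lx Lpsi : R).
Hypothesis T_ge0 : 0 <= T.
Hypothesis w_le : forall i s, 0 <= s <= T -> `|w i s| <= W.
Hypothesis x_le : forall i s, 0 <= s <= T -> `|x i s| <= Lx.
Hypothesis psi_le : forall i j s, 0 <= s <= T -> `|psi i j s| <= Lpsi.

Definition step_factor := growth_const * (1 + T).

Lemma step_factor_ge1 : 1 <= step_factor.
Proof.
have G1 := growth_const_ge1; have := mulr_ge0 (le_trans ler01 G1) T_ge0.
rewrite /step_factor; nra.
Qed.

Lemma feedback_budget B s : 0 <= B -> W <= B -> 0 <= s <= T ->
  2 * W + 3 * rate_const * nodes * B * s + nodes * B <= step_factor * B.
Proof.
move=> B0 WB /andP[s0 sT]; rewrite /step_factor /growth_const.
have := rate_const_ge1; have := nodes_ge1 => N1 M1.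
have MNB0 : 0 <= rate_const * nodes * B by rewrite !mulr_ge0 //; lra.
have : rate_const * nodes * B * s <= rate_const * nodes * B * T by rewrite ler_wpM2l.
have : 0 <= (nodes + 2) * T * B by rewrite !mulr_ge0 //; lra.
nra.
Qed.

Lemma measurable_ypos i : measurable_fun (@nonneg_half R) (ypos i).
Proof.
rewrite /ypos; case: eqP => _; last exact: measurable_cst.
by apply: measurable_maxr; [exact: measurable_sum | exact: measurable_cst].
Qed.

Lemma ypos_le i s : 0 <= s <= T -> `|ypos i s| <= nI%:R * Lx.
Proof.
move=> sT; rewrite /ypos /pos_part; case: eqP => _.
- have : `|\sum_k x k s| <= nI%:R * Lx.
    by apply: le_trans (ler_norm_sum _ _ _) (sum_le_card _) => k; exact: x_le.
  set S := \sum_k _ => SL; apply: le_trans SL.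
  by have [_|_] := leP S 0; rewrite ?normr0.
- by rewrite normr0 mulr_ge0 // (le_trans (normr_ge0 _) (x_le i0 sT)).
Qed.

Lemma x_integ_rate i s : 0 <= s <= T -> x i s = w i s - integ0 (rate i) s.
Proof.
move=> /andP[s0 sT]; rewrite x_eq // /rate (@integ0_lincomb _ _ _ _ _ _ Lpsi (nI%:R * Lx)).
- by rewrite opprD addrA.
- exact: psi_meas.
- exact: measurable_ypos.
- by move=> j r /andP[r0 rs]; rewrite psi_le // r0 (le_trans rs sT).
- by move=> r /andP[r0 rs]; rewrite ypos_le // r0 (le_trans rs sT).
Qed.

Lemma measurable_rate i : measurable_fun (@nonneg_half R) (rate i).
Proof.
apply: (measurable_funD (f := fun s => \sum_j mu i j * psi i j s)
  (g := fun s => theta i * ypos i s)).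
- by apply: measurable_sum => j; exact: measurable_funM (measurable_cst _) (psi_meas _ _).
- exact: measurable_funM (measurable_cst _) (measurable_ypos _).
Qed.

Lemma rate_le i s : 0 <= s <= T ->
  `|rate i s| <= rate_const * Lpsi + rate_const * (nI%:R * Lx).
Proof.
move=> sT; have Lpsi0 : 0 <= Lpsi := le_trans (normr_ge0 _) (psi_le i0 j0 sT).
apply: le_trans (ler_normD _ _) (lerD _ _).
- apply: le_trans (ler_norm_sum _ _ _) _; apply: le_trans (_ : \sum_j mu i j * Lpsi <= _).
    by apply: ler_sum => j _; rewrite normrM ger0_norm // ler_wpM2l ?psi_le.
  by rewrite -mulr_suml ler_wpM2r ?row_mu_le.
- by rewrite normrM ger0_norm // ler_pM ?ypos_le ?theta_le.
Qed.

Lemma x_norm_le_of_rate k K : 0 <= K ->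
  (forall s, 0 <= s <= T -> 0 < x k s -> - K <= rate k s) ->
  (forall s, 0 <= s <= T -> x k s < 0 -> rate k s <= K) ->
  forall s, 0 <= s <= T -> `|x k s| <= 2 * W + K * s.
Proof.
move=> K0; apply: integ0_feedback_norm_le K0 (measurable_rate k) (rate_le k) _ (w_le k).
exact: x_integ_rate.
Qed.

Local Notation vertex := ('I_nI + 'I_nJ)%type.

Definition inner_edge (A : {set vertex}) i j := [&& E i j, inl i \in A & inr j \in A].

Definition bounded_outside (A : {set vertex}) (B : R) : Prop :=
  (forall i, inl i \notin A -> forall s, 0 <= s <= T -> `|x i s| <= B) /\
  (forall i j, ~~ inner_edge A i j -> forall s, 0 <= s <= T -> `|psi i j s| <= B).

Lemma inner_edge_setD1 (A : {set vertex}) v i j :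
  inner_edge (A :\ v) i j = [&& inner_edge A i j, inl i != v & inr j != v].
Proof.
rewrite /inner_edge !in_setD1.
by case: (E i j) (inl i \in A) (inr j \in A) (inl i != v) (inr j != v) => [] [] [] [] [].
Qed.

Lemma leaf_inner_row (A : {set vertex}) k j j' :
  (#|[set a in A | bip_adj E (inl k) a]| <= 1)%N ->
  inner_edge A k j -> inner_edge A k j' -> j' = j.
Proof.
move=> /card_le1_eqP leaf /and3P[kj _ jA] /and3P[kj' _ j'A].
by have := leaf (inr j) (inr j'); rewrite !inE jA j'A /= => /(_ kj kj') [].
Qed.

Lemma leaf_inner_col (A : {set vertex}) j i i' :
  (#|[set a in A | bip_adj E (inr j) a]| <= 1)%N ->
  inner_edge A i j -> inner_edge A i' j -> i' = i.
Proof.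
move=> /card_le1_eqP leaf /and3P[ij iA _] /and3P[i'j i'A _].
by have := leaf (inl i) (inl i'); rewrite !inE iA i'A /= => /(_ ij i'j) [].
Qed.

Section Peeling.
Variables (A : {set vertex}) (B : R).
Hypothesis B_ge0 : 0 <= B.
Hypothesis W_le_B : W <= B.
Hypothesis outB : bounded_outside A B.

Let W_ge0 : 0 <= W.
Proof. by apply: le_trans (w_le i0 (_ : 0 <= 0 <= T)); rewrite ?lexx ?T_ge0. Qed.
Let B_le : B <= step_factor * B.
Proof. by rewrite ler_peMl // step_factor_ge1. Qed.
Let NB_le : nodes * B <= step_factor * B.
Proof.
apply: le_trans (feedback_budget (s := 0) B_ge0 W_le_B _); last by rewrite lexx T_ge0.
by rewrite mulr0 addr0 lerDr mulr_ge0.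
Qed.

Lemma bounded_outside_delJ j : j != j0 ->
  (#|[set a in A | bip_adj E (inr j) a]| <= 1)%N ->
  bounded_outside (A :\ inr j) (step_factor * B).
Proof.
move=> jj0 leaf; split=> [i|i j'].
  rewrite in_setD1 /= => iA s sT; exact: le_trans (outB.1 i iA s sT) B_le.
rewrite inner_edge_setD1 /=; have [ij'|ij' _] := boolP (inner_edge A i j'); last first.
  by move=> s sT; apply: le_trans (outB.2 i j' ij' s sT) B_le.
rewrite andTb => /negPn/eqP[jj'] s sT; subst j'; apply: le_trans NB_le.
have := @sum_others_le _ _ (fun i' => psi i' j s) i B B_ge0.
rewrite col_sum ?(proj1 (andP sT)) // /zneg (negbTE jj0) oppr0 sub0r normrN.
move=> /(_ _)/le_trans; apply; last by rewrite ler_wpM2r ?nI_le_nodes.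
move=> i' i'i; apply: outB.2 sT; apply: contra i'i => i'j; apply/eqP.
exact: leaf_inner_col leaf ij' i'j.
Qed.

Let K := 3 * rate_const * nodes * B.

Let K_ge0 : 0 <= K.
Proof. by rewrite !mulr_ge0 // (le_trans ler01) ?rate_const_ge1 ?nodes_ge1. Qed.

Let NB_ge0 : 0 <= nodes * B.
Proof. by rewrite mulr_ge0 // (le_trans ler01) ?nodes_ge1. Qed.

Let x_budget k s : 0 <= s <= T -> `|x k s| <= 2 * W + K * s ->
  `|x k s| + nodes * B <= step_factor * B.
Proof.
by move=> sT xk; apply: le_trans (feedback_budget B_ge0 W_le_B sT); rewrite lerD2r.
Qed.

Lemma bounded_outside_delI k : k != i0 ->
  (#|[set a in A | bip_adj E (inl k) a]| <= 1)%N ->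
  bounded_outside (A :\ inl k) (step_factor * B).
Proof.
move=> ki0 leaf; have y0 s : ypos k s = 0 by rewrite /ypos (negbTE ki0).
have near j s : 0 <= s <= T ->
    `|psi k j s| <= nodes * B \/ `|psi k j s - x k s| <= nodes * B.
  move=> sT; have [kj|kj] := boolP (inner_edge A k j); [right|left].
  - have := @sum_others_le _ _ (psi k ^~ s) j B B_ge0.
    rewrite row_sum ?(proj1 (andP sT)) // y0 subr0 distrC.
    move=> /(_ _)/le_trans; apply; last by rewrite ler_wpM2r ?nJ_le_nodes.
    move=> j' j'j; apply: outB.2 sT; apply: contra j'j => kj'; apply/eqP.
    exact: leaf_inner_row leaf kj kj'.
  - by apply: le_trans (outB.2 _ _ kj _ sT) _; rewrite ler_peMl ?nodes_ge1.
have rate_k s : rate k s = \sum_j mu k j * psi k j s by rewrite /rate y0 mulr0 addr0.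
have MNB : rate_const * (nodes * B) <= K.
  have := mulr_ge0 (le_trans ler01 rate_const_ge1) NB_ge0; rewrite /K; lra.
have xk : forall s, 0 <= s <= T -> `|x k s| <= 2 * W + K * s.
  apply: (@x_norm_le_of_rate k _ K_ge0) => s sT x_sgn; rewrite rate_k.
  - rewrite lerNl -sumrN; under eq_bigr do rewrite -mulrN.
    apply: le_trans MNB; apply: (weighted_sum_le (mu_ge0 k) (row_mu_le k) NB_ge0) => j.
    by case: (near j s sT); rewrite ler_norml => /andP[]; lra.
  - apply: le_trans MNB; apply: (weighted_sum_le (mu_ge0 k) (row_mu_le k) NB_ge0) => j.
    by case: (near j s sT); rewrite ler_norml => /andP[]; lra.
split=> [i|i j].
- rewrite in_setD1 negb_and negbK => /orP[/eqP[->{i}]|iA] s sT.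
    by apply: le_trans (x_budget sT (xk s sT)); rewrite lerDl.
  exact: le_trans (outB.1 i iA s sT) B_le.
- rewrite inner_edge_setD1 /=; have [ij|ij _] := boolP (inner_edge A i j); last first.
    by move=> s sT; apply: le_trans (outB.2 i j ij s sT) B_le.
  rewrite andbT => /negPn/eqP[ik] s sT; subst i.
  apply: le_trans (x_budget sT (xk s sT)); case: (near j s sT) => psi_near.
    by apply: le_trans psi_near _; rewrite lerDr.
  rewrite addrC -lerBlDr; apply: le_trans psi_near.
  exact: lerB_dist.
Qed.

Lemma base_bound : A = [set inl i0; inr j0]%SET ->
  forall i s, 0 <= s <= T -> `|x i s| <= step_factor * B.
Proof.
move=> AE i s sT; have [->{i}|ii0] := eqVneq i i0; last first.
  by apply: le_trans (outB.1 i _ s sT) B_le; rewrite AE !inE /= orbF.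
suff xk : forall s, 0 <= s <= T -> `|x i0 s| <= 2 * W + K * s.
  by apply: le_trans (x_budget sT (xk s sT)); rewrite lerDl.
clear s sT.
have KE : K = 3 * rate_const * (nodes * B) by rewrite /K mulrA.
suff rate_i0 s : 0 <= s <= T ->
    (0 < x i0 s -> - K <= rate i0 s) /\ (x i0 s < 0 -> rate i0 s <= K).
  by apply: (@x_norm_le_of_rate i0 _ K_ge0) => s /rate_i0[].
move=> sT; have s0 := proj1 (andP sT).
set q := \sum_j mu i0 j * psi i0 j s - mu i0 j0 * psi i0 j0 s.
set r := \sum_j psi i0 j s - psi i0 j0 s.
set c := \sum_k x k s - x i0 s.
have rateE : rate i0 s =
    q + mu i0 j0 * (x i0 s - ypos i0 s - r) + theta i0 * ypos i0 s.
  by rewrite /rate -row_sum // /q /r; ring.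
have not_inner j : j != j0 -> ~~ inner_edge A i0 j.
  move=> jj0; apply/negP => /and3P[_ _]; rewrite AE !inE => /eqP[ej].
  by rewrite ej eqxx in jj0.
have c_le : `|c| <= nodes * B.
  apply: le_trans (sum_others_le B_ge0 _) _; last by rewrite ler_wpM2r ?nI_le_nodes.
  by move=> k ki0; apply: outB.1 sT; rewrite AE !inE /= orbF.
have r_le : `|r| <= nodes * B.
  apply: le_trans (sum_others_le B_ge0 _) _; last by rewrite ler_wpM2r ?nJ_le_nodes.
  by move=> j jj0; apply: outB.2 sT; exact: not_inner.
have q_le : `|q| <= rate_const * (nodes * B).
  have M0 := le_trans ler01 rate_const_ge1.
  apply: le_trans (sum_others_le (mulr_ge0 M0 B_ge0) _) _.
    move=> j jj0; rewrite normrM ger0_norm // ler_pM ?mu_le //.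
    by apply: outB.2 sT; exact: not_inner.
  by rewrite mulrCA ler_wpM2l // ler_wpM2r ?nJ_le_nodes.
have theta_i0_le : 0 <= theta i0 <= mu i0 j0 by rewrite theta_ge0 theta_le_mu.
have yE : ypos i0 s = Num.max (x i0 s + c) 0.
  by rewrite /ypos eqxx /pos_part /c addrC subrK.
rewrite rateE KE.
exact: overflow_rate_bounds theta_i0_le (mu_le i0 j0) yE c_le r_le q_le.
Qed.

End Peeling.

Lemma bip_adj_sym : symmetric (bip_adj E).
Proof. by case=> a [] b. Qed.

Lemma bip_adj_irr : irreflexive (bip_adj E).
Proof. by case. Qed.

Hypothesis E_acyclic :
  forall p : seq vertex, uniq p -> (2 < size p)%N -> ~~ cycle (bip_adj E) p.
Hypothesis E_i0j0 : E i0 j0.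

Lemma x_le_peeling n (A : {set vertex}) B : (#|A| <= n)%N ->
  inl i0 \in A -> inr j0 \in A -> 0 <= B -> W <= B -> bounded_outside A B ->
  forall i s, 0 <= s <= T -> `|x i s| <= step_factor ^+ n * B.
Proof.
elim: n A B => [|n IH] A B An i0A j0A B0 WB outB.
  by move: An; rewrite (cardsD1 (inl i0)) i0A.
have D1 := step_factor_ge1; have D0 := le_trans ler01 D1.
have DB : 0 <= step_factor * B by rewrite mulr_ge0.
have WDB : W <= step_factor * B by rewrite (le_trans WB) // ler_peMl.
have [AE|[v vA leaf]] := forest_peel bip_adj_sym bip_adj_irr E_acyclic i0A j0A E_i0j0.
  move=> i s sT; apply: le_trans (base_bound B0 WB outB AE i sT) _.
  by rewrite ler_wpM2r // exprS ler_peMr // exprn_ege1.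
move: vA; rewrite finset.in_setD !inE negb_or => /andP[/andP[vi0 vj0] vA].
have An' : (#|A :\ v| <= n)%N by move: An; rewrite (cardsD1 v) vA.
rewrite exprSr -mulrA; case: v => [k|j] in vi0 vj0 vA leaf An' *.
- have ki0 : k != i0 by apply: contraNneq vi0 => ->.
  apply: IH An' _ _ DB WDB (bounded_outside_delI B0 WB outB ki0 leaf).
  + by rewrite in_setD1 i0A andbT eq_sym.
  + by rewrite in_setD1 j0A.
- have jj0 : j != j0 by apply: contraNneq vj0 => ->.
  apply: IH An' _ _ DB WDB (bounded_outside_delJ B0 WB outB jj0 leaf).
  + by rewrite in_setD1 i0A.
  + by rewrite in_setD1 j0A andbT eq_sym.
Qed.

End Network.

Section Bounds.
Variable R : realType.

Lemma loc_bounded_fin (I : finType) (F : I -> R -> R) t : 0 <= t ->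
  (forall i, loc_bounded (F i)) -> exists M, forall i s, 0 <= s <= t -> `|F i s| <= M.
Proof.
move=> t0 Fb; exists (\sum_i `|projT1 (cid (Fb i t t0))|) => i s st.
apply: le_trans (projT2 (cid (Fb i t t0)) s st) (le_trans (ler_norm _) _).
by rewrite (bigD1 i) //= lerDl sumr_ge0.
Qed.

Lemma supnorm_ub n (w : 'I_n -> R -> R) t : 0 <= t -> (forall i, loc_bounded (w i)) ->
  forall i s, 0 <= s <= t -> `|w i s| <= supnorm w t.
Proof.
move=> t0 wb i s st; have [M wM] := loc_bounded_fin t0 wb.
have supS : has_sup [set norm1 (fun i => w i r) | r in `[0, t]%classic].
  split; first by exists (norm1 (fun i => w i 0)), 0 => //=; rewrite in_itv /= lexx t0.
  exists (n%:R * M) => _ [r rt <-]; apply: sum_le_card => k; apply: wM.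
  by move: rt; rewrite /= in_itv.
apply: le_trans (_ : norm1 (fun i => w i s) <= _).
  by rewrite /norm1 (bigD1 i) //= lerDl sumr_ge0.
by apply: sup_upper_bound => //; exists s; rewrite //= in_itv.
Qed.

Lemma le_powR_growth (a C t : R) n : 0 <= a -> 1 <= C -> 0 <= t ->
  a * (C * (1 + t)) ^+ n <= (a * C ^+ n + n%:R) * powR (1 + t) (a * C ^+ n + n%:R).
Proof.
move=> a0 C1 t0; have t1 : 1 <= 1 + t by rewrite lerDl.
have aCn0 : 0 <= a * C ^+ n by rewrite mulr_ge0 // exprn_ge0 // (le_trans ler01 C1).
rewrite exprMn mulrA; apply: ler_pM => //.
- by rewrite exprn_ge0 // (le_trans ler01 t1).
- by rewrite lerDl.
- rewrite -[X in X <= _](powR_mulrn _ (le_trans ler01 t1)).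
  by apply: ler_powR; rewrite // lerDr.
Qed.
End Bounds.

Theorem proposition3 (R : realType) (nI nJ : nat)
  (E : 'I_nI -> 'I_nJ -> bool) (mu : 'I_nI -> 'I_nJ -> R) (theta : 'I_nI -> R)
  (i0 : 'I_nI) (j0 : 'I_nJ) :
  is_tree E ->
  (forall i j, E i j -> 0 < mu i j) ->
  (forall i j, ~~ E i j -> mu i j = 0) ->
  (forall i, 0 <= theta i) ->
  E i0 j0 -> theta i0 <= mu i0 j0 ->
  exists m7 : R,
  forall (w x : 'I_nI -> R -> R) (psi : 'I_nI -> 'I_nJ -> R -> R),
    let y := fun (i : 'I_nI) (t : R) =>
      if i == i0 then pos_part (\sum_(k < nI) x k t) else 0 in
    let z := fun (j : 'I_nJ) (t : R) =>
      if j == j0 then neg_part (\sum_(k < nI) x k t) else 0 in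
    (forall i, measurable_fun (@nonneg_half R) (w i) /\ loc_bounded (w i)) ->
    (forall i, measurable_fun (@nonneg_half R) (x i) /\ loc_bounded (x i)) ->
    (forall i j, measurable_fun (@nonneg_half R) (psi i j) /\ loc_bounded (psi i j)) ->
    (forall i j s, ~~ E i j -> 0 <= s -> psi i j s = 0) ->
    (forall i t, 0 <= t ->
       x i t = w i t - \sum_(j < nJ) mu i j * integ0 (psi i j) t
               - theta i * integ0 (y i) t) ->
    (forall i t, 0 <= t -> \sum_(j < nJ) psi i j t = x i t - y i t) ->
    (forall j t, 0 <= t -> \sum_(i < nI) psi i j t = - z j t) ->
    forall t : R, 0 <= t ->
      norm1 (fun i => x i t) <= m7 * powR (1 + t) m7 * supnorm w t.
Proof.
move=> [_ acyclic] mu_pos mu_off theta_ge0 Ei0j0 theta_le.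
have mu_ge0 i j : 0 <= mu i j by have [/mu_pos/ltW|/mu_off->] := boolP (E i j).
pose N := (nI + nJ)%N; pose C := growth_const mu theta.
exists (nI%:R * C ^+ N + N%:R) => w x psi y z hw hx hpsi psi_off x_eq row col t t0.
have [Lx xL] := loc_bounded_fin t0 (fun i => (hx i).2).
have [Lp psiL] := loc_bounded_fin (F := fun p : 'I_nI * 'I_nJ => psi p.1 p.2) t0
  (fun p => (hpsi p.1 p.2).2).
have wW := supnorm_ub t0 (fun i => (hw i).2).
have W0 : 0 <= supnorm w t by apply: le_trans (wW i0 0 _); rewrite ?lexx ?t0.
have outT : bounded_outside E x psi t [set: _] (supnorm w t).
  split=> [i|i j]; first by rewrite finset.in_setT.
  rewrite /inner_edge !finset.in_setT !andbT => Eij s /andP[s0 _].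
  by rewrite psi_off ?normr0.
have x_le i : `|x i t| <= step_factor mu theta t ^+ N * supnorm w t.
  apply: (x_le_peeling mu_ge0 theta_ge0 theta_le (fun i => (hx i).1)
    (fun i j => (hpsi i j).1) x_eq row col t0 wW xL (fun k j => psiL (k, j)) acyclic Ei0j0 _
    (finset.in_setT _) (finset.in_setT _) W0 (lexx _) outT).
  - by rewrite finset.cardsT card_sum !card_ord.
  - by rewrite lexx t0.
rewrite /norm1; apply: le_trans (sum_le_card x_le) _; rewrite /step_factor -/C mulrA.
apply: ler_wpM2r => //; apply: le_powR_growth => //; last exact: growth_const_ge1.
Qed.
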